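(* Let $i\in\mathbb Z_{\ge0}$, $J\in\mathbb Z_{>0}$, $j\in\mathbb Z$. If $j<0$ or $j>J$ then $W_J(i,j;i+j,0\mid v,\lambda)=0$. If $0\le j\le J$ then $$W_J(i,j;i+j,0\mid v,\lambda)=f(2\eta)^j\frac{[2\eta J]_J}{[2\eta(J-j)]_{J-j}[2\eta j]_j}\frac{[\lambda+2\eta(i+j)]_{J-j}}{[\eta\Lambda-v]_J}\cdot\frac{[v+\lambda+2\eta(i+2j-1)-\eta\Lambda]_j\,[\eta\Lambda-2\eta(i+j)-v]_{J-j}}{[\lambda+2\eta j]_{J-j}\,[\lambda+2\eta(2j-J-1)]_j}.$$
   Context: Fix $\eta,\tau\in\mathbb C$, $\operatorname{Im}\tau>0$. $f(z)$ denotes either $\theta(z)=-\sum_{j\in\mathbb Z}\exp\big(\pi\mathbf i\tau(j+\tfrac12)^2+2\pi\mathbf i(j+\tfrac12)(z+\tfrac12)\big)$ or $\sin(\pi z)$. Elliptic Pochhammer: $[a]_k=\prod_{m=0}^{k-1}f(a-2\eta m)$ for $k\ge0$, $[a]_k=\prod_{m=1}^{-k}f(a+2\eta m)^{-1}$ for $k<0$. Unfused weights ($k\ge0$): $W_1(k,0;k,0\mid v,\lambda,\Lambda)=\frac{f(\eta(\Lambda-2k)-v)f(\lambda+2k\eta)}{f(\eta\Lambda-v)f(\lambda)}$, $W_1(k,1;k+1,0\mid\cdot)=\frac{f(v+\lambda+\eta(2k+2-\Lambda))f(2\eta)}{f(\eta\Lambda-v)f(\lambda)}$, $W_1(k,0;k-1,1\mid\cdot)=\frac{f(\lambda-v+\eta(2k-2-\Lambda))f(2\eta(\Lambda+1-k))f(2k\eta)}{f(\eta\Lambda-v)f(\lambda)f(2\eta)}$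 ($k\ge1$), $W_1(k,1;k,1\mid\cdot)=\frac{f(\eta(2k-\Lambda)-v)f(\lambda+2\eta(k-\Lambda))}{f(\eta\Lambda-v)f(\lambda)}$, and $0$ otherwise. Column weights: for $\mathcal J_1=(j_{1,k})_{k=1}^J,\mathcal J_2=(j_{2,k})_{k=1}^J\in\{0,1\}^J$, $i^{(1)}=i_1$, $i^{(k+1)}=i^{(k)}+j_{1,k}-j_{2,k}$, $\Phi_J=\lambda$, $\Phi_k=\Phi_{k+1}\mp2\eta$ according as $j_{1,k+1}=0$ or $1$; $W_J(i_1,\mathcal J_1;i_2,\mathcal J_2\mid v,\lambda)=\prod_{k=1}^JW_1(i^{(k)},j_{1,k};i^{(k+1)},j_{2,k}\mid v+2\eta(k-1),\Phi_k,\Lambda)$ if all $i^{(k)}\ge0$ and $i^{(J+1)}=i_2$, else $0$. Fused weight: $W_J(i_1,j_1;i_2,j_2\mid v,\lambda)=\sum_{|\mathcal J_1|=j_1}W_J(i_1,\mathcal J_1;i_2,\mathcal K\mid v,\lambda)$ for any $\mathcal K$ with $|\mathcal K|=j_2$ (independent of $\mathcal K$); $\Lambda$ is suppressed. *)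

From Stdlib Require Import Reals ZArith List Lia Bool.
Import ListNotations.
Open Scope R_scope.

Record Cplx := mkC { Re : R; Im : R }.

Definition C0 : Cplx := mkC 0 0.
Definition C1 : Cplx := mkC 1 0.
Definition Ci : Cplx := mkC 0 1.
Definition RtoC (x : R) : Cplx := mkC x 0.
Definition ZtoC (n : Z) : Cplx := mkC (IZR n) 0.
Definition Cadd (z w : Cplx) : Cplx := mkC (Re z + Re w) (Im z + Im w).
Definition Copp (z : Cplx) : Cplx := mkC (- Re z) (- Im z).
Definition Csub (z w : Cplx) : Cplx := Cadd z (Copp w).
Definition Cmul (z w : Cplx) : Cplx :=
  mkC (Re z * Re w - Im z * Im w) (Re z * Im w + Im z * Re w).
(* inverse; Cinv C0 = C0 (total convention, never used on 0 in the theorem) *)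
Definition Cinv (z : Cplx) : Cplx :=
  let d := Re z * Re z + Im z * Im z in mkC (Re z / d) (- Im z / d).
Definition Cdiv (z w : Cplx) : Cplx := Cmul z (Cinv w).
Fixpoint Cpow (z : Cplx) (n : nat) : Cplx :=
  match n with O => C1 | S n => Cmul z (Cpow z n) end.

Declare Scope C_scope.
Delimit Scope C_scope with Cplx.
Infix "+" := Cadd : C_scope.
Infix "-" := Csub : C_scope.
Infix "*" := Cmul : C_scope.
Infix "/" := Cdiv : C_scope.
Notation "- z" := (Copp z) : C_scope.

Definition Cexp (z : Cplx) : Cplx := mkC (exp (Re z) * cos (Im z)) (exp (Re z) * sin (Im z)).
Definition CPI : Cplx := RtoC PI.
Definition Csin (w : Cplx) : Cplx :=
  Cdiv (Csub (Cexp (Cmul Ci w)) (Cexp (Copp (Cmul Ci w)))) (Cmul (RtoC 2) Ci).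

Definition C_cv (u : nat -> Cplx) (l : Cplx) : Prop :=
  Un_cv (fun n => Re (u n)) (Re l) /\ Un_cv (fun n => Im (u n)) (Im l).

Definition Csum (l : list Cplx) : Cplx := fold_right Cadd C0 l.
Definition Cprod (l : list Cplx) : Cplx := fold_right Cmul C1 l.

Definition theta_term (tau z : Cplx) (j : Z) : Cplx :=
  let h := Cadd (ZtoC j) (RtoC (1/2)) in
  Cexp (Cadd (Cmul (Cmul (Cmul CPI Ci) tau) (Cmul h h))
             (Cmul (Cmul (Cmul (RtoC 2) (Cmul CPI Ci)) h) (Cadd z (RtoC (1/2))))).

Definition theta_partial (tau z : Cplx) (N : nat) : Cplx :=
  Copp (Csum (map (fun k : nat => theta_term tau z (Z.of_nat k - Z.of_nat N)%Z)
                  (seq 0 (2 * N + 1)))).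

(** f is either theta (the limit of the series, which converges for Im tau > 0)
    or z |-> sin(pi z) *)
Definition is_f (tau : Cplx) (f : Cplx -> Cplx) : Prop :=
  (forall z, C_cv (theta_partial tau z) (f z)) \/
  (forall z, f z = Csin (Cmul CPI z)).

Definition epoch (f : Cplx -> Cplx) (eta a : Cplx) (k : Z) : Cplx :=
  if (0 <=? k)%Z then
    Cprod (map (fun m : nat => f (Csub a (Cmul (ZtoC (2 * Z.of_nat m)) eta)))
               (seq 0 (Z.to_nat k)))
  else
    Cprod (map (fun m : nat => Cinv (f (Cadd a (Cmul (ZtoC (2 * Z.of_nat m)) eta))))
               (seq 1 (Z.to_nat (- k)))).

Definition W1 (f : Cplx -> Cplx) (eta Lam : Cplx) (a b c d : Z) (v lam : Cplx) : Cplx :=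
  let e (n : Z) := Cmul (ZtoC n) eta in
  let den := Cmul (f (Csub (Cmul eta Lam) v)) (f lam) in
  if (a <? 0)%Z then C0 else
  if (b =? 0)%Z && (d =? 0)%Z && (c =? a)%Z then
    Cdiv (Cmul (f (Csub (Cmul eta (Csub Lam (ZtoC (2 * a)))) v)) (f (Cadd lam (e (2 * a)%Z))))
         den
  else if (b =? 1)%Z && (d =? 0)%Z && (c =? a + 1)%Z then
    Cdiv (Cmul (f (Cadd (Cadd v lam) (Cmul eta (Csub (ZtoC (2 * a + 2)) Lam)))) (f (e 2%Z)))
         den
  else if (b =? 0)%Z && (d =? 1)%Z && (c =? a - 1)%Z && (1 <=? a)%Z then
    Cdiv (Cmul (Cmul (f (Csub lam (Cadd v (Cmul eta (Cadd (ZtoC (- 2 * a + 2)) Lam)))))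
                     (f (Cmul (Cmul (RtoC 2) eta) (Csub (Cadd Lam C1) (ZtoC a)))))
               (f (e (2 * a)%Z)))
         (Cmul den (f (e 2%Z)))
  else if (b =? 1)%Z && (d =? 1)%Z && (c =? a)%Z then
    Cdiv (Cmul (f (Csub (Cmul eta (Csub (ZtoC (2 * a)) Lam)) v))
               (f (Cadd lam (Cmul (Cmul (RtoC 2) eta) (Csub (ZtoC a) Lam)))))
         den
  else C0.

(** * Column weights.  Bit vectors are lists of booleans (true = 1),
    position k (1-based) is [nth (k-1) l false]. *)
Definition bitZ (l : list bool) (k : nat) : Z := if nth (k - 1) l false then 1%Z else 0%Z.

Definition iseq (i1 : Z) (l1 l2 : list bool) (k : nat) : Z :=
  (i1 + fold_right Z.add 0 (map (fun m => bitZ l1 m - bitZ l2 m) (seq 1 (k - 1))))%Z.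

(* Phi_J = lam, Phi_k = Phi_{k+1} - 2 eta if j_{1,k+1} = 0, + 2 eta if = 1 *)
Fixpoint Phi_off (l1 : list bool) (J k : nat) (fuel : nat) : Z :=
  match fuel with
  | O => 0%Z
  | S fuel' => if (J <=? k)%nat then 0%Z
               else (Phi_off l1 J (S k) fuel' + (2 * bitZ l1 (S k) - 1))%Z
  end.
Definition Phi (eta lam : Cplx) (l1 : list bool) (J k : nat) : Cplx :=
  Cadd lam (Cmul (ZtoC (2 * Phi_off l1 J k J)) eta).

Definition WJcol (f : Cplx -> Cplx) (eta Lam : Cplx) (J : nat) (i1 : Z) (l1 : list bool)
    (i2 : Z) (l2 : list bool) (v lam : Cplx) : Cplx :=
  if forallb (fun k => (0 <=? iseq i1 l1 l2 k)%Z) (seq 1 (J + 1))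
     && (iseq i1 l1 l2 (J + 1) =? i2)%Z then
    Cprod (map (fun k =>
      W1 f eta Lam (iseq i1 l1 l2 k) (bitZ l1 k) (iseq i1 l1 l2 (S k)) (bitZ l2 k)
         (Cadd v (Cmul (ZtoC (2 * (Z.of_nat k - 1))) eta)) (Phi eta lam l1 J k))
      (seq 1 J))
  else C0.

Fixpoint bitvecs (n : nat) : list (list bool) :=
  match n with
  | O => [[]]
  | S n => map (cons false) (bitvecs n) ++ map (cons true) (bitvecs n)
  end.

Definition weight (l : list bool) : Z := Z.of_nat (length (filter (fun b => b) l)).

(** Fused weight: sum over J1 with |J1| = j1, with the fixed choice
    K = (1,...,1,0,...,0) with |K| = j2 (the paper states the result is
    independent of K; in the theorem j2 = 0 so K = (0,...,0) is forced). *)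
Definition WJ (f : Cplx -> Cplx) (eta Lam : Cplx) (J : nat) (i1 j1 i2 j2 : Z) (v lam : Cplx) : Cplx :=
  let K := repeat true (Z.to_nat j2) ++ repeat false (J - Z.to_nat j2) in
  Csum (map (fun l1 => WJcol f eta Lam J i1 l1 i2 K v lam)
            (filter (fun l1 => (weight l1 =? j1)%Z) (bitvecs J))).

(* Splitting off the first column gives the recursion
     W_{J+1}(i, j) = W_1(i,0;i,0) W_J(i, j) + W_1(i,1;i+1,0) W_J(i+1, j-1),
   with v shifted by 2 eta on the right.  The closed form obeys the same
   recursion: after cancelling the common Pochhammer factors, what remains is
   one instance of the Weierstrass three-term identity
     f(x1+x3) f(x1-x3) f(x4+x2) f(x4-x2) + f(x1+x4) f(x1-x4) f(x2+x3) f(x2-x3)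
       = f(x4+x3) f(x4-x3) f(x1+x2) f(x1-x2).
   This identity holds whenever f(x+y) f(x-y) = B0(x) B1(y) - B1(x) B0(y).
   For the sine, sin(a+b) sin(a-b) = sin^2 a - sin^2 b.  For theta, reindexing
   the double series by p = j+k+1, q = j-k writes theta(x+y) theta(x-y) as
   E(x) O(y) - O(x) E(y), with E and O the even and odd parts of the Gaussian
   series sum_n exp(pi i tau n^2/2 + 2 pi i n z); on symmetric truncations the
   two sides differ by terms of Gaussian decay, so the identity passes to the
   limit. *)

From Pilot Require Import Defs.
From Stdlib Require Import Reals ZArith List Lia Lra Field Bool Permutation FinFun
  FunctionalExtensionality.
Import ListNotations.
Open Scope R_scope.

Lemma Cplx_eq (z w : Cplx) : Re z = Re w -> Im z = Im w -> z = w.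
Proof. destruct z, w; simpl; intros -> ->; reflexivity. Qed.

Lemma C1_neq_C0 : Defs.C1 <> C0.
Proof. intro H; injection H; lra. Qed.

Lemma Cnorm2_neq_0 (z : Cplx) : z <> C0 -> Re z * Re z + Im z * Im z <> 0.
Proof.
  destruct z as [a b]; simpl; intros Hz H; apply Hz.
  assert (a = 0) by nra; assert (b = 0) by nra; subst; reflexivity.
Qed.

Lemma Cplx_field_theory : field_theory C0 Defs.C1 Cadd Cmul Csub Copp Cdiv Cinv (@eq Cplx).
Proof.
  constructor; [constructor; intros; apply Cplx_eq; simpl; ring | exact C1_neq_C0
               | reflexivity | intros p Hp].
  pose proof (Cnorm2_neq_0 p Hp); destruct p as [a b]; apply Cplx_eq; simpl in *.
  all: field; assumption.
Qed.

Add Field Cplx_field : Cplx_field_theory.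

Ltac Cplx_field :=
  apply Cplx_eq; cbn [Re Im Cadd Csub Copp Cmul ZtoC RtoC CPI Ci];
  repeat (rewrite plus_IZR || rewrite minus_IZR || rewrite mult_IZR || rewrite opp_IZR);
  field.

Lemma ZtoC_add (a b : Z) : ZtoC (a + b) = Cadd (ZtoC a) (ZtoC b).
Proof. Cplx_field. Qed.

Lemma Cmul_neq_0 (z w : Cplx) : z <> C0 -> w <> C0 -> Cmul z w <> C0.
Proof.
  intros Hz Hw E; apply Hz.
  replace z with (Cdiv (Cmul z w) w) by (field; exact Hw).
  rewrite E; field; exact Hw.
Qed.

Lemma Csum_app (l1 l2 : list Cplx) : Csum (l1 ++ l2) = Cadd (Csum l1) (Csum l2).
Proof. induction l1; simpl; [ring | rewrite IHl1; ring]. Qed.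

Lemma Cprod_app (l1 l2 : list Cplx) : Cprod (l1 ++ l2) = Cmul (Cprod l1) (Cprod l2).
Proof. induction l1; simpl; [ring | rewrite IHl1; ring]. Qed.

Lemma Csum_scal {A} (c : Cplx) (g : A -> Cplx) (l : list A) :
  Csum (map (fun x => Cmul c (g x)) l) = Cmul c (Csum (map g l)).
Proof. induction l; simpl; [ring | rewrite IHl; ring]. Qed.

Lemma Csum_sub {A} (F G : A -> Cplx) (l : list A) :
  Csub (Csum (map F l)) (Csum (map G l)) = Csum (map (fun x => Csub (F x) (G x)) l).
Proof. induction l; simpl; [ring | rewrite <- IHl; ring]. Qed.

Lemma Csum_ext_in {A} (F G : A -> Cplx) (l : list A) :
  (forall x, In x l -> F x = G x) -> Csum (map F l) = Csum (map G l).
Proof. intros; f_equal; apply map_ext_in; assumption. Qed.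

Lemma Csum_filter {A} (p : A -> bool) (F : A -> Cplx) (l : list A) :
  Csum (map F (filter p l)) = Csum (map (fun x => if p x then F x else C0) l).
Proof. induction l; simpl; [reflexivity | destruct (p a); simpl; rewrite IHl; ring]. Qed.

Lemma Csum_perm (l1 l2 : list Cplx) : Permutation l1 l2 -> Csum l1 = Csum l2.
Proof. induction 1; simpl; try congruence; ring. Qed.

Lemma Csum_mul {A B} (a : A -> Cplx) (b : B -> Cplx) (l1 : list A) (l2 : list B) :
  Cmul (Csum (map a l1)) (Csum (map b l2)) =
  Csum (map (fun pr => Cmul (a (fst pr)) (b (snd pr))) (list_prod l1 l2)).
Proof.
  induction l1 as [|x l1 IH]; simpl; [ring|].
  rewrite map_app, Csum_app, <- IH, map_map; cbn [fst snd]; rewrite Csum_scal; ring.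
Qed.

(** * The Weierstrass three-term identity *)

Definition sym_prod (f : Cplx -> Cplx) (x y : Cplx) : Cplx := Cmul (f (Cadd x y)) (f (Csub x y)).

Definition weierstrass_identity (f : Cplx -> Cplx) : Prop := forall x1 x2 x3 x4 : Cplx,
  Cadd (Cmul (sym_prod f x1 x3) (sym_prod f x4 x2)) (Cmul (sym_prod f x1 x4) (sym_prod f x2 x3))
  = Cmul (sym_prod f x4 x3) (sym_prod f x1 x2).

(* A Plücker relation among 2 x 2 minors. *)
Lemma weierstrass_of_split (f B0 B1 : Cplx -> Cplx) :
  (forall x y, sym_prod f x y = Csub (Cmul (B0 x) (B1 y)) (Cmul (B1 x) (B0 y))) ->
  weierstrass_identity f.
Proof. intros H x1 x2 x3 x4; rewrite !H; ring. Qed.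

Lemma Cexp_add (z w : Cplx) : Cexp (Cadd z w) = Cmul (Cexp z) (Cexp w).
Proof. destruct z, w; apply Cplx_eq; simpl; rewrite exp_plus, ?cos_plus, ?sin_plus; ring. Qed.

Lemma Cexp_mul_opp (z : Cplx) : Cmul (Cexp z) (Cexp (Copp z)) = Defs.C1.
Proof.
  rewrite <- Cexp_add; destruct z as [a b]; apply Cplx_eq; simpl;
    rewrite !Rplus_opp_r, exp_0, ?cos_0, ?sin_0; ring.
Qed.

Lemma Cexp_neq_0 (z : Cplx) : Cexp z <> C0.
Proof.
  intro E; apply C1_neq_C0; rewrite <- (Cexp_mul_opp z), E; ring.
Qed.

Lemma Cexp_opp (z : Cplx) : Cexp (Copp z) = Cdiv Defs.C1 (Cexp z).
Proof.
  pose proof (Cexp_neq_0 z); rewrite <- (Cexp_mul_opp z); field; assumption.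
Qed.

Lemma sym_prod_sin (f : Cplx -> Cplx) (x y : Cplx) :
  (forall z, f z = Csin (Cmul CPI z)) ->
  sym_prod f x y = Csub (Cmul (f x) (f x)) (Cmul (f y) (f y)).
Proof.
  intros Hf; unfold sym_prod; rewrite !Hf; unfold Csin.
  set (A := Cmul Ci (Cmul CPI x)); set (B := Cmul Ci (Cmul CPI y)).
  replace (Cmul Ci (Cmul CPI (Cadd x y))) with (Cadd A B) by (unfold A, B; ring).
  replace (Cmul Ci (Cmul CPI (Csub x y))) with (Cadd A (Copp B)) by (unfold A, B; ring).
  repeat rewrite ?Cexp_add, ?Cexp_opp.
  pose proof (Cexp_neq_0 A); pose proof (Cexp_neq_0 B).
  field; repeat split; auto; intro E; injection E; lra.
Qed.

Lemma weierstrass_sin (f : Cplx -> Cplx) :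
  (forall z, f z = Csin (Cmul CPI z)) -> weierstrass_identity f.
Proof.
  intro Hf; apply (weierstrass_of_split f (fun x => Cmul (f x) (f x)) (fun _ => Defs.C1)).
  intros x y; rewrite (sym_prod_sin f x y Hf); ring.
Qed.

(** * Theta functions *)

Definition parity_sign (p : Z) : Cplx := if Z.even p then Defs.C1 else Copp Defs.C1.

Lemma cos_sin_IZR_mul_PI (p : Z) :
  cos (IZR p * PI) = (if Z.even p then 1 else -1) /\ sin (IZR p * PI) = 0.
Proof.
  induction p as [|p [Hc Hs]|p [Hc Hs]] using Z.peano_ind.
  - rewrite Rmult_0_l, cos_0, sin_0; auto.
  - rewrite succ_IZR, Rmult_plus_distr_r, Rmult_1_l, neg_cos, neg_sin, Z.even_succ,
      <- Z.negb_even, Hc, Hs; destruct (Z.even p); simpl; split; ring.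
  - rewrite <- Z.sub_1_r, minus_IZR, Rmult_minus_distr_r, Rmult_1_l, Z.sub_1_r,
      Z.even_pred, <- Z.negb_even, cos_minus, sin_minus, cos_PI, sin_PI, Hc, Hs;
      destruct (Z.even p); simpl; split; ring.
Qed.

Lemma Cexp_i_pi_IZR (p : Z) : Cexp (Cmul (Cmul CPI Ci) (ZtoC p)) = parity_sign p.
Proof.
  destruct (cos_sin_IZR_mul_PI p) as [Hc Hs]; unfold parity_sign.
  replace (Cmul (Cmul CPI Ci) (ZtoC p)) with (mkC 0 (IZR p * PI))
    by (apply Cplx_eq; simpl; ring).
  apply Cplx_eq; simpl; rewrite exp_0, ?Hc, ?Hs; destruct (Z.even p); simpl; ring.
Qed.

Section ThetaProduct.
Variable tau : Cplx.

Definition gauss_term (n : Z) (z : Cplx) : Cplx :=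
  Cexp (Cadd (Cmul (Cmul (Cmul CPI Ci) tau) (Cmul (RtoC (1/2)) (ZtoC (n * n))))
             (Cmul (Cmul (RtoC 2) (Cmul CPI Ci)) (Cmul (ZtoC n) z))).

Definition pair_term (x y : Cplx) (pq : Z * Z) : Cplx :=
  Cmul (parity_sign (fst pq)) (Cmul (gauss_term (fst pq) x) (gauss_term (snd pq) y)).

Definition pair_index (jk : Z * Z) : Z * Z := (fst jk + snd jk + 1, fst jk - snd jk)%Z.

(* (j + 1/2)^2 + (k + 1/2)^2 = (p^2 + q^2) / 2 for p = j + k + 1 and q = j - k. *)
Lemma theta_term_mul (j k : Z) (x y : Cplx) :
  Cmul (theta_term tau (Cadd x y) j) (theta_term tau (Csub x y) k) =
  pair_term x y (pair_index (j, k)).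
Proof.
  unfold pair_term, pair_index, gauss_term, theta_term; simpl fst; simpl snd.
  rewrite <- Cexp_i_pi_IZR, <- !Cexp_add; f_equal; Cplx_field.
Qed.

Definition sym_range (N : nat) : list Z :=
  map (fun k : nat => (Z.of_nat k - Z.of_nat N)%Z) (seq 0 (2 * N + 1)).

Definition sym_square (N : nat) : list (Z * Z) := list_prod (sym_range N) (sym_range N).

Definition in_sym_square (N : nat) (pq : Z * Z) : bool :=
  (Z.abs (fst pq) <=? Z.of_nat N)%Z && (Z.abs (snd pq) <=? Z.of_nat N)%Z.

Lemma In_sym_range (N : nat) (z : Z) :
  In z (sym_range N) <-> (- Z.of_nat N <= z <= Z.of_nat N)%Z.
Proof.
  unfold sym_range; rewrite in_map_iff; split.
  - intros [k [<- Hk]]; apply in_seq in Hk; lia.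
  - intros Hz; exists (Z.to_nat (z + Z.of_nat N)); split; [lia | apply in_seq; lia].
Qed.

Lemma In_sym_square (N : nat) (pq : Z * Z) : In pq (sym_square N) <-> in_sym_square N pq = true.
Proof.
  destruct pq as [p q]; unfold sym_square, in_sym_square; simpl.
  rewrite in_prod_iff, !In_sym_range, andb_true_iff, !Z.leb_le; lia.
Qed.

Lemma NoDup_list_prod {A B} (l1 : list A) (l2 : list B) :
  NoDup l1 -> NoDup l2 -> NoDup (list_prod l1 l2).
Proof.
  induction 1 as [|a l1 Ha H1 IH]; intros H2; simpl; [constructor|].
  apply NoDup_app; auto.
  - apply Injective_map_NoDup; auto; intros x y H; injection H; auto.
  - intros [x y] Hin Hin2; apply in_map_iff in Hin; destruct Hin as [z [Hz _]].
    injection Hz; intros; subst; apply in_prod_iff in Hin2; tauto.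
Qed.

Lemma NoDup_sym_square (N : nat) : NoDup (sym_square N).
Proof.
  apply NoDup_list_prod; apply Injective_map_NoDup; try apply seq_NoDup;
    intros a b H; lia.
Qed.

Lemma length_sym_square (N : nat) : length (sym_square N) = ((2 * N + 1) * (2 * N + 1))%nat.
Proof. unfold sym_square, sym_range; rewrite length_prod, length_map, length_seq; reflexivity. Qed.

Lemma theta_partial_sym_range (N : nat) (z : Cplx) :
  theta_partial tau z N = Copp (Csum (map (theta_term tau z) (sym_range N))).
Proof. unfold theta_partial, sym_range; rewrite map_map; reflexivity. Qed.

Lemma theta_partial_mul (N : nat) (x y : Cplx) :
  Cmul (theta_partial tau (Cadd x y) N) (theta_partial tau (Csub x y) N) =
  Csum (map (fun jk => pair_term x y (pair_index jk)) (sym_square N)).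
Proof.
  rewrite !theta_partial_sym_range.
  transitivity (Cmul (Csum (map (theta_term tau (Cadd x y)) (sym_range N)))
                     (Csum (map (theta_term tau (Csub x y)) (sym_range N)))); [ring|].
  rewrite Csum_mul; apply Csum_ext_in; intros [j k] _; apply theta_term_mul.
Qed.

Definition even_part (N : nat) (x : Cplx) : Cplx :=
  Csum (map (fun p => if Z.even p then gauss_term p x else C0) (sym_range N)).
Definition odd_part (N : nat) (x : Cplx) : Cplx :=
  Csum (map (fun p => if Z.even p then C0 else gauss_term p x) (sym_range N)).
Definition split_prod (N : nat) (x y : Cplx) : Cplx :=
  Csub (Cmul (even_part N x) (odd_part N y)) (Cmul (odd_part N x) (even_part N y)).

Lemma split_prod_eq (N : nat) (x y : Cplx) :
  split_prod N x y =
  Csum (map (fun pq => if Z.odd (fst pq + snd pq) then pair_term x y pq else C0) (sym_square N)).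
Proof.
  unfold split_prod, even_part, odd_part; rewrite !Csum_mul, Csum_sub.
  apply Csum_ext_in; intros [p q] _; unfold pair_term, parity_sign; simpl.
  rewrite Z.odd_add, <- !Z.negb_even.
  destruct (Z.even p), (Z.even q); simpl; ring.
Qed.

(* [pair_index] is a bijection from Z^2 onto the pairs (p, q) with p + q odd. *)
Lemma Csum_odd_reindex (N : nat) (W : Z * Z -> Cplx) :
  Csum (map (fun pq => if Z.odd (fst pq + snd pq) then W pq else C0) (sym_square N)) =
  Csum (map (fun jk => if in_sym_square N (pair_index jk) then W (pair_index jk) else C0)
            (sym_square N)).
Proof.
  rewrite <- !(Csum_filter _ (fun jk => W (pair_index jk))), <- !Csum_filter,
    <- (map_map pair_index W).
  apply Csum_perm, Permutation_map; symmetry; apply NoDup_Permutation.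
  - apply Injective_map_NoDup; [|apply NoDup_filter, NoDup_sym_square].
    intros [a b] [c d] H; unfold pair_index in H; simpl in H; injection H; intros.
    f_equal; lia.
  - apply NoDup_filter, NoDup_sym_square.
  - intros [p q]; rewrite in_map_iff, filter_In, In_sym_square; split.
    + intros [[j k] [Hpq Hin]]; apply filter_In in Hin; destruct Hin as [_ Hr].
      rewrite <- Hpq; split; [exact Hr|]; simpl.
      unfold pair_index; simpl; apply Z.odd_spec; exists j; lia.
    + intros [Hb Ho]; simpl in Ho; apply Z.odd_spec in Ho; destruct Ho as [m Hm].
      exists (m, m - q)%Z.
      assert (Hidx : pair_index (m, m - q)%Z = (p, q)) by (unfold pair_index; simpl; f_equal; lia).
      split; [exact Hidx|]; apply filter_In; rewrite Hidx, In_sym_square; split; [|exact Hb].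
      unfold in_sym_square in Hb |- *; cbn [fst snd] in Hb |- *.
      apply andb_true_iff in Hb; destruct Hb as [Hp Hq]; apply Z.leb_le in Hp, Hq.
      apply andb_true_iff; split; apply Z.leb_le; lia.
Qed.

Lemma theta_partial_mul_sub_split (N : nat) (x y : Cplx) :
  Csub (Cmul (theta_partial tau (Cadd x y) N) (theta_partial tau (Csub x y) N)) (split_prod N x y) =
  Csum (map (fun jk => if in_sym_square N (pair_index jk) then C0
                       else pair_term x y (pair_index jk))
            (sym_square N)).
Proof.
  rewrite theta_partial_mul, split_prod_eq, Csum_odd_reindex, Csum_sub.
  apply Csum_ext_in; intros jk _; destruct (in_sym_square N (pair_index jk)); ring.
Qed.

End ThetaProduct.

Definition l1norm (z : Cplx) : R := Rabs (Re z) + Rabs (Im z).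

Lemma l1norm_nonneg (z : Cplx) : 0 <= l1norm z.
Proof. unfold l1norm; pose proof (Rabs_pos (Re z)); pose proof (Rabs_pos (Im z)); lra. Qed.

Lemma l1norm_add (z w : Cplx) : l1norm (Cadd z w) <= l1norm z + l1norm w.
Proof.
  destruct z as [a b], w as [c d]; unfold l1norm; simpl.
  pose proof (Rabs_triang a c); pose proof (Rabs_triang b d); lra.
Qed.

Lemma l1norm_mul (z w : Cplx) : l1norm (Cmul z w) <= l1norm z * l1norm w.
Proof.
  destruct z as [a b], w as [c d]; unfold l1norm; simpl.
  unfold Rminus; pose proof (Rabs_triang (a * c) (- (b * d))).
  pose proof (Rabs_triang (a * d) (b * c)).
  rewrite Rabs_Ropp, !Rabs_mult in *.
  pose proof (Rabs_pos a); pose proof (Rabs_pos b).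
  pose proof (Rabs_pos c); pose proof (Rabs_pos d).
  nra.
Qed.

Lemma l1norm_Csum_le {A} (F : A -> Cplx) (l : list A) (M : R) :
  (forall x, In x l -> l1norm (F x) <= M) -> l1norm (Csum (map F l)) <= INR (length l) * M.
Proof.
  induction l as [|a l IH]; intros H; cbn [length map Csum fold_right].
  - unfold l1norm; simpl; rewrite Rabs_R0; lra.
  - fold (Csum (map F l)); rewrite S_INR.
    pose proof (l1norm_add (F a) (Csum (map F l))).
    assert (l1norm (F a) <= M) by (apply H; left; reflexivity).
    assert (l1norm (Csum (map F l)) <= INR (length l) * M)
      by (apply IH; intros; apply H; right; assumption).
    lra.
Qed.

Lemma l1norm_Cexp (w : Cplx) : l1norm (Cexp w) <= 2 * exp (Re w).
Proof.
  destruct w as [a b]; unfold l1norm; simpl; pose proof (exp_pos a).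
  rewrite !Rabs_mult, (Rabs_right (exp a)) by lra.
  assert (Rabs (cos b) <= 1) by (apply Rabs_le; apply COS_bound).
  assert (Rabs (sin b) <= 1) by (apply Rabs_le; apply SIN_bound).
  nra.
Qed.

Lemma l1norm_parity_sign (p : Z) : l1norm (parity_sign p) = 1.
Proof.
  unfold l1norm, parity_sign; destruct (Z.even p); simpl;
    rewrite ?Ropp_0, Rabs_R0, ?Rabs_Ropp, Rabs_R1; ring.
Qed.

Lemma exp_le_exp (a b : R) : a <= b -> exp a <= exp b.
Proof. intros [H | ->]; [left; apply exp_increasing; assumption | lra]. Qed.

Lemma neg_quadratic_le (c a P : R) :
  0 < c -> - c * (P * P) - a * P <= a * a / (2 * c) - c / 2 * (P * P).
Proof.
  intros Hc.
  assert (0 <= c / 2 * ((P + a / c) * (P + a / c)))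
    by (apply Rmult_le_pos; [lra | apply Rle_0_sqr]).
  assert (a * a / (2 * c) - c / 2 * (P * P) - (- c * (P * P) - a * P)
          = c / 2 * ((P + a / c) * (P + a / c))) by (field; lra).
  lra.
Qed.

Lemma sqr_div_4_lt_exp (t : R) : 0 < t -> t * t / 4 < exp t.
Proof.
  intros Ht; replace t with (t / 2 + t / 2) at 3 by field; rewrite exp_plus.
  pose proof (exp_ineq1 (t / 2) ltac:(lra)); nra.
Qed.

Lemma gauss_decay_mul_le (a : R) (N : nat) : 0 < a ->
  (2 * INR N + 1) * (2 * INR N + 1) * (INR N + 1) <= (1 + 72 / (a * a)) * exp (a * (INR N * INR N)).
Proof.
  intros Ha; assert (H72 : 0 < 72 / (a * a)) by (apply Rdiv_lt_0_compat; nra).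
  destruct N as [|N'].
  - simpl; replace (a * (0 * 0)) with 0 by ring; rewrite exp_0; lra.
  - set (n := INR (S N')).
    assert (Hn : 1 <= n) by (unfold n; rewrite S_INR; pose proof (pos_INR N'); lra).
    assert (Hpoly : (2 * n + 1) * (2 * n + 1) * (n + 1) <= 18 * (n * n * (n * n)))
      by (assert (0 <= (n - 1) * (n * n)) by (apply Rmult_le_pos; nra); nra).
    assert (He : a * (n * n) * (a * (n * n)) / 4 < exp (a * (n * n)))
      by (apply sqr_div_4_lt_exp, Rmult_lt_0_compat; nra).
    assert (H18 : 18 * (n * n * (n * n)) = 72 / (a * a) * (a * (n * n) * (a * (n * n)) / 4))
      by (field; lra).
    pose proof (exp_pos (a * (n * n))); nra.
Qed.

Lemma gauss_decay_le (a : R) (N : nat) : 0 < a ->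
  (2 * INR N + 1) * (2 * INR N + 1) * exp (- (a * (INR N * INR N)))
  <= (1 + 72 / (a * a)) * / (INR N + 1).
Proof.
  intros Ha; pose proof (gauss_decay_mul_le a N Ha) as H; pose proof (pos_INR N).
  pose proof (exp_pos (a * (INR N * INR N))); rewrite exp_Ropp.
  apply (Rmult_le_reg_r ((INR N + 1) * exp (a * (INR N * INR N)))); [nra|].
  replace ((2 * INR N + 1) * (2 * INR N + 1) * / exp (a * (INR N * INR N))
             * ((INR N + 1) * exp (a * (INR N * INR N))))
    with ((2 * INR N + 1) * (2 * INR N + 1) * (INR N + 1)) by (field; lra).
  replace ((1 + 72 / (a * a)) * / (INR N + 1) * ((INR N + 1) * exp (a * (INR N * INR N))))
    with ((1 + 72 / (a * a)) * exp (a * (INR N * INR N))) by (field; lra).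
  exact H.
Qed.


Lemma Un_cv_squeeze_0 (u w : nat -> R) : (forall n, Rabs (u n) <= w n) -> Un_cv w 0 -> Un_cv u 0.
Proof.
  intros H Hw eps Heps; destruct (Hw eps Heps) as [N HN]; exists N; intros n Hn.
  specialize (HN n Hn); unfold R_dist in *; rewrite Rminus_0_r in *.
  pose proof (H n); pose proof (Rle_abs (w n)); lra.
Qed.

Lemma gauss_tail_cv (a K : R) : 0 < a ->
  Un_cv (fun N => INR ((2 * N + 1) * (2 * N + 1)) * (4 * exp (K - a * (INR N * INR N)))) 0.
Proof.
  intros Ha; set (M := 4 * exp K * (1 + 72 / (a * a))).
  apply Un_cv_squeeze_0 with (w := fun N => M * / (INR N + 1)).
  - intros N; pose proof (gauss_decay_le a N Ha); pose proof (exp_pos K).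
    pose proof (exp_pos (- (a * (INR N * INR N)))); pose proof (pos_INR N).
    rewrite mult_INR, plus_INR, mult_INR; change (INR 2) with 2; change (INR 1) with 1.
    unfold Rminus; rewrite exp_plus, Rabs_right by (apply Rle_ge; apply Rmult_le_pos; nra).
    unfold M; nra.
  - replace 0 with (M * 0) by ring; apply CV_mult; [|exact RinvN_cv].
    intros eps Heps; exists 0%nat; intros; unfold R_dist; rewrite Rminus_diag, Rabs_R0; assumption.
Qed.

Lemma C_cv_mul (u w : nat -> Cplx) (l m : Cplx) :
  C_cv u l -> C_cv w m -> C_cv (fun n => Cmul (u n) (w n)) (Cmul l m).
Proof. intros [] []; split; simpl; [apply CV_minus | apply CV_plus]; apply CV_mult; assumption. Qed.

Lemma C_cv_add (u w : nat -> Cplx) (l m : Cplx) :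
  C_cv u l -> C_cv w m -> C_cv (fun n => Cadd (u n) (w n)) (Cadd l m).
Proof. intros [] []; split; simpl; apply CV_plus; assumption. Qed.

Lemma C_cv_sub (u w : nat -> Cplx) (l m : Cplx) :
  C_cv u l -> C_cv w m -> C_cv (fun n => Csub (u n) (w n)) (Csub l m).
Proof. intros [] []; split; simpl; apply CV_minus; assumption. Qed.

Lemma C_cv_ext (u w : nat -> Cplx) (l : Cplx) : (forall n, u n = w n) -> C_cv u l -> C_cv w l.
Proof.
  intros H [H1 H2]; split; [eapply Un_cv_ext; [|exact H1] | eapply Un_cv_ext; [|exact H2]];
    intros n; simpl; rewrite H; reflexivity.
Qed.

Lemma C_cv_unique (u : nat -> Cplx) (l m : Cplx) : C_cv u l -> C_cv u m -> l = m.
Proof. intros [] []; apply Cplx_eq; eapply UL_sequence; eassumption. Qed.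

Lemma C_cv_0_l1norm (u : nat -> Cplx) (w : nat -> R) :
  (forall n, l1norm (u n) <= w n) -> Un_cv w 0 -> C_cv u C0.
Proof.
  intros H Hw; split; apply Un_cv_squeeze_0 with (w := w); try assumption; intros n;
    specialize (H n); unfold l1norm in H;
    pose proof (Rabs_pos (Re (u n))); pose proof (Rabs_pos (Im (u n))); lra.
Qed.

Section GaussianDecay.
Variable tau : Cplx.
Hypothesis Htau : 0 < Im tau.

Let c := PI * Im tau / 2.

Lemma c_pos : 0 < c.
Proof. unfold c; pose proof PI_RGT_0; apply Rmult_lt_0_compat; [apply Rmult_lt_0_compat|]; lra. Qed.

Lemma l1norm_gauss_term (p : Z) (x : Cplx) :
  l1norm (gauss_term tau p x) <=
  2 * exp ((2 * PI * Im x) * (2 * PI * Im x) / (2 * c) - c / 2 * (IZR p * IZR p)).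
Proof.
  eapply Rle_trans; [apply l1norm_Cexp|]; apply Rmult_le_compat_l; [lra|]; apply exp_le_exp.
  replace (Re _) with (- c * (IZR p * IZR p) - (2 * PI * Im x) * IZR p)
    by (unfold c; cbn [Re Im Cadd Cmul ZtoC RtoC CPI Ci]; rewrite mult_IZR; field).
  apply neg_quadratic_le, c_pos.
Qed.

Lemma l1norm_pair_term_outside (N : nat) (x y : Cplx) (pq : Z * Z) :
  in_sym_square N pq = false ->
  l1norm (pair_term tau x y pq) <=
  4 * exp (((2 * PI * Im x) * (2 * PI * Im x) + (2 * PI * Im y) * (2 * PI * Im y)) / (2 * c)
           - c / 2 * (INR N * INR N)).
Proof.
  destruct pq as [p q]; unfold in_sym_square, pair_term; cbn [fst snd]; intros Hout.
  assert (HN : INR N * INR N <= IZR p * IZR p + IZR q * IZR q).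
  { rewrite INR_IZR_INZ, <- !mult_IZR, <- plus_IZR; apply IZR_le.
    apply andb_false_iff in Hout; destruct Hout as [H | H]; apply Z.leb_gt in H; nia. }
  eapply Rle_trans; [apply l1norm_mul|]; rewrite l1norm_parity_sign, Rmult_1_l.
  eapply Rle_trans; [apply l1norm_mul|].
  eapply Rle_trans.
  { apply Rmult_le_compat; try apply l1norm_nonneg; apply l1norm_gauss_term. }
  match goal with |- 2 * exp ?a * (2 * exp ?b) <= _ =>
    replace (2 * exp a * (2 * exp b)) with (4 * exp (a + b)) by (rewrite exp_plus; ring) end.
  apply Rmult_le_compat_l; [lra|]; apply exp_le_exp.
  pose proof c_pos; unfold Rdiv; nra.
Qed.

Lemma theta_partial_mul_sub_split_cv (x y : Cplx) :
  C_cv (fun N => Csub (Cmul (theta_partial tau (Cadd x y) N) (theta_partial tau (Csub x y) N))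
                      (split_prod tau N x y)) C0.
Proof.
  set (K := ((2 * PI * Im x) * (2 * PI * Im x) + (2 * PI * Im y) * (2 * PI * Im y)) / (2 * c)).
  apply C_cv_0_l1norm with
    (w := fun N => INR ((2 * N + 1) * (2 * N + 1)) * (4 * exp (K - c / 2 * (INR N * INR N)))).
  - intros N; rewrite theta_partial_mul_sub_split, <- length_sym_square.
    apply l1norm_Csum_le; intros jk _.
    destruct (in_sym_square N (pair_index jk)) eqn:E.
    + unfold l1norm; simpl; rewrite Rabs_R0.
      pose proof (exp_pos (K - c / 2 * (INR N * INR N))); lra.
    + apply l1norm_pair_term_outside; assumption.
  - apply gauss_tail_cv; pose proof c_pos; lra.
Qed.

Lemma split_prod_cv (f : Cplx -> Cplx) :
  (forall z, C_cv (theta_partial tau z) (f z)) ->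
  forall x y, C_cv (fun N => split_prod tau N x y) (sym_prod f x y).
Proof.
  intros Hf x y.
  pose proof (C_cv_sub _ _ _ _ (C_cv_mul _ _ _ _ (Hf (Cadd x y)) (Hf (Csub x y)))
                (theta_partial_mul_sub_split_cv x y)) as H.
  replace (sym_prod f x y) with (Csub (Cmul (f (Cadd x y)) (f (Csub x y))) C0)
    by (unfold sym_prod; ring).
  eapply C_cv_ext; [|exact H]; intros n; simpl; ring.
Qed.

End GaussianDecay.

Lemma weierstrass_theta (tau : Cplx) (f : Cplx -> Cplx) :
  0 < Im tau -> (forall z, C_cv (theta_partial tau z) (f z)) -> weierstrass_identity f.
Proof.
  intros Htau Hf x1 x2 x3 x4; pose proof (split_prod_cv tau Htau f Hf) as D.
  apply (C_cv_unique (fun N => Cmul (split_prod tau N x4 x3) (split_prod tau N x1 x2))).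
  - eapply C_cv_ext; [|apply C_cv_add; apply C_cv_mul; apply D].
    intros n; simpl; unfold split_prod; ring.
  - apply C_cv_mul; apply D.
Qed.

(** * Column weights *)

Definition bz (b : bool) : Z := if b then 1%Z else 0%Z.

Lemma bitZ_cons_1 (b : bool) (l : list bool) : bitZ (b :: l) 1 = bz b.
Proof. reflexivity. Qed.

Lemma bitZ_cons_S (b : bool) (l : list bool) (k : nat) :
  (1 <= k)%nat -> bitZ (b :: l) (S k) = bitZ l k.
Proof. intros Hk; unfold bitZ; destruct k; [lia|]; simpl; rewrite Nat.sub_0_r; reflexivity. Qed.

Lemma seq_1_S (n : nat) : seq 1 (S n) = 1%nat :: map S (seq 1 n).
Proof. simpl; rewrite seq_shift; reflexivity. Qed.

Lemma iseq_1 (i : Z) (l1 l2 : list bool) : iseq i l1 l2 1 = i.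
Proof. unfold iseq; simpl; lia. Qed.

Lemma iseq_cons (i : Z) (b c : bool) (l1 l2 : list bool) (k : nat) : (1 <= k)%nat ->
  iseq i (b :: l1) (c :: l2) (S k) = iseq (i + bz b - bz c)%Z l1 l2 k.
Proof.
  intros Hk; unfold iseq; destruct k as [|k]; [lia|].
  replace (S (S k) - 1)%nat with (S k) by lia; replace (S k - 1)%nat with k by lia.
  rewrite seq_1_S, map_cons, map_map; simpl fold_right; rewrite !bitZ_cons_1.
  rewrite (map_ext_in _ (fun m => (bitZ l1 m - bitZ l2 m)%Z)); [lia|].
  intros m Hm; apply in_seq in Hm; rewrite !bitZ_cons_S by lia; reflexivity.
Qed.

Definition Phi_off_sum (l : list bool) (J k : nat) : Z :=
  fold_right Z.add 0%Z (map (fun m => (2 * bitZ l m - 1)%Z) (seq (S k) (J - k))).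

Lemma Phi_off_eq_sum (l : list bool) (J fuel k : nat) :
  (J - k <= fuel)%nat -> Phi_off l J k fuel = Phi_off_sum l J k.
Proof.
  revert k; induction fuel as [|fuel IH]; intros k Hk; unfold Phi_off_sum; simpl.
  - replace (J - k)%nat with 0%nat by lia; reflexivity.
  - destruct (J <=? k)%nat eqn:E.
    + apply Nat.leb_le in E; replace (J - k)%nat with 0%nat by lia; reflexivity.
    + apply Nat.leb_gt in E; rewrite IH by lia; unfold Phi_off_sum.
      replace (J - k)%nat with (S (J - S k)) by lia; simpl; lia.
Qed.

Lemma Phi_off_sum_cons (b : bool) (l : list bool) (J k : nat) :
  Phi_off_sum (b :: l) (S J) (S k) = Phi_off_sum l J k.
Proof.
  unfold Phi_off_sum; simpl (S J - S k)%nat; rewrite <- seq_shift, map_map.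
  f_equal; apply map_ext_in; intros m Hm; apply in_seq in Hm.
  rewrite bitZ_cons_S by lia; reflexivity.
Qed.

Lemma Phi_off_sum_0 (l : list bool) (J : nat) :
  length l = J -> Phi_off_sum l J 0 = (2 * weight l - Z.of_nat J)%Z.
Proof.
  intros <-; induction l as [|b l IH]; [reflexivity|].
  unfold Phi_off_sum in *; rewrite Nat.sub_0_r in *; simpl length.
  rewrite seq_1_S, map_cons, map_map; simpl fold_right.
  rewrite (map_ext_in _ (fun m => (2 * bitZ l m - 1)%Z)).
  2:{ intros m Hm; apply in_seq in Hm; rewrite bitZ_cons_S by lia; reflexivity. }
  rewrite IH; unfold weight; rewrite bitZ_cons_1.
  destruct b; cbn [filter length bz]; rewrite ?Nat2Z.inj_succ; lia.
Qed.

Lemma forallb_map {A B} (g : A -> B) (p : B -> bool) (l : list A) :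
  forallb p (map g l) = forallb (fun x => p (g x)) l.
Proof. induction l; simpl; [reflexivity | rewrite IHl; reflexivity]. Qed.

Lemma forallb_ext_in {A} (p q : A -> bool) (l : list A) :
  (forall x, In x l -> p x = q x) -> forallb p l = forallb q l.
Proof.
  induction l; intros H; simpl; [reflexivity|].
  rewrite H, IHl; [reflexivity | intros; apply H; right; assumption | left; reflexivity].
Qed.

Lemma WJcol_cons (f : Cplx -> Cplx) (eta Lam : Cplx) (J : nat) (i : Z) (b c : bool)
    (l l2 : list bool) (i2 : Z) (v lam : Cplx) :
  (0 <= i)%Z ->
  WJcol f eta Lam (S J) i (b :: l) i2 (c :: l2) v lam =
  Cmul (W1 f eta Lam i (bz b) (i + bz b - bz c)%Z (bz c) v
           (Cadd lam (Cmul (ZtoC (2 * Phi_off_sum l J 0)) eta)))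
       (WJcol f eta Lam J (i + bz b - bz c)%Z l i2 l2 (Cadd v (Cmul (ZtoC 2) eta)) lam).
Proof.
  intros Hi; unfold WJcol.
  replace (seq 1 (S J + 1)) with (1%nat :: map S (seq 1 (J + 1))) by (rewrite <- seq_1_S; f_equal).
  simpl forallb at 1; rewrite iseq_1, forallb_map.
  replace (0 <=? i)%Z with true by (symmetry; apply Z.leb_le; assumption); simpl andb.
  rewrite (forallb_ext_in _ (fun k => (0 <=? iseq (i + bz b - bz c) l l2 k)%Z)).
  2:{ intros k Hk; apply in_seq in Hk; rewrite iseq_cons by lia; reflexivity. }
  replace (S J + 1)%nat with (S (J + 1)) by lia; rewrite iseq_cons by lia.
  destruct (_ && _)%bool; [|ring].
  rewrite seq_1_S, map_cons, map_map; simpl Cprod.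
  rewrite iseq_1, iseq_cons, iseq_1, !bitZ_cons_1 by lia.
  f_equal; [f_equal|].
  - replace (2 * (Z.of_nat 1 - 1))%Z with 0%Z by lia; change (ZtoC 0) with C0; ring.
  - unfold Phi; rewrite Phi_off_eq_sum, Phi_off_sum_cons by lia; reflexivity.
  - f_equal; apply map_ext_in; intros k Hk; apply in_seq in Hk.
    rewrite !iseq_cons, !bitZ_cons_S by lia; f_equal.
    + change (Cadd v (Cmul (ZtoC (2 * (Z.of_nat (S k) - 1))) eta) =
              Cadd (Cadd v (Cmul (ZtoC 2) eta)) (Cmul (ZtoC (2 * (Z.of_nat k - 1))) eta)).
      replace (2 * (Z.of_nat (S k) - 1))%Z with (2 + 2 * (Z.of_nat k - 1))%Z by lia.
      rewrite ZtoC_add; ring.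
    + unfold Phi; rewrite !Phi_off_eq_sum, Phi_off_sum_cons by lia; reflexivity.
Qed.

Definition WJ0 (f : Cplx -> Cplx) (eta Lam : Cplx) (J : nat) (i j : Z) (v lam : Cplx) : Cplx :=
  Csum (map (fun l1 => WJcol f eta Lam J i l1 (i + j)%Z (repeat false J) v lam)
            (filter (fun l1 => (weight l1 =? j)%Z) (bitvecs J))).

Lemma WJ_eq_WJ0 (f : Cplx -> Cplx) (eta Lam : Cplx) (J : nat) (i j : Z) (v lam : Cplx) :
  WJ f eta Lam J i j (i + j)%Z 0%Z v lam = WJ0 f eta Lam J i j v lam.
Proof. unfold WJ, WJ0; simpl (Z.to_nat 0); rewrite Nat.sub_0_r; reflexivity. Qed.

Lemma length_bitvecs (J : nat) (l : list bool) : In l (bitvecs J) -> length l = J.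
Proof.
  revert l; induction J; simpl; intros l H.
  - destruct H as [<- | []]; reflexivity.
  - apply in_app_or in H; destruct H as [H | H]; apply in_map_iff in H;
      destruct H as [l' [<- H]]; simpl; f_equal; auto.
Qed.

Lemma weight_bounds (l : list bool) : (0 <= weight l <= Z.of_nat (length l))%Z.
Proof.
  unfold weight; split; [lia|]; apply inj_le.
  induction l as [|b l IH]; simpl; [lia | destruct b; simpl; lia].
Qed.

Lemma WJ0_out_of_range (f : Cplx -> Cplx) (eta Lam : Cplx) (J : nat) (i j : Z) (v lam : Cplx) :
  (j < 0 \/ j > Z.of_nat J)%Z -> WJ0 f eta Lam J i j v lam = C0.
Proof.
  intros Hj; unfold WJ0.
  assert (Hnil : forall L, (forall l, In l L -> length l = J) ->
                 filter (fun l1 => (weight l1 =? j)%Z) L = []).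
  { induction L as [|l L IH]; intros HL; simpl; [reflexivity|].
    pose proof (HL l (or_introl eq_refl)); pose proof (weight_bounds l).
    replace (weight l =? j)%Z with false by (symmetry; apply Z.eqb_neq; lia).
    apply IH; intros; apply HL; right; assumption. }
  rewrite Hnil by apply length_bitvecs; reflexivity.
Qed.

Lemma filter_map {A B} (g : A -> B) (p : B -> bool) (l : list A) :
  filter p (map g l) = map g (filter (fun x => p (g x)) l).
Proof. induction l; simpl; [reflexivity | destruct (p (g a)); simpl; rewrite IHl; reflexivity]. Qed.

Lemma weight_cons_true (l : list bool) : weight (true :: l) = (weight l + 1)%Z.
Proof. unfold weight; simpl length; lia. Qed.

Lemma WJcol_cons_zero (f : Cplx -> Cplx) (eta Lam : Cplx) (J : nat) (i : Z) (b : bool)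
    (l : list bool) (i2 : Z) (v lam : Cplx) :
  (0 <= i)%Z -> length l = J ->
  WJcol f eta Lam (S J) i (b :: l) i2 (repeat false (S J)) v lam =
  Cmul (W1 f eta Lam i (bz b) (i + bz b)%Z 0 v
           (Cadd lam (Cmul (ZtoC (2 * (2 * weight l - Z.of_nat J))) eta)))
       (WJcol f eta Lam J (i + bz b)%Z l i2 (repeat false J) (Cadd v (Cmul (ZtoC 2) eta)) lam).
Proof.
  intros Hi HL; change (repeat false (S J)) with (false :: repeat false J).
  rewrite WJcol_cons, Phi_off_sum_0 by assumption; simpl (bz false).
  rewrite Z.sub_0_r; reflexivity.
Qed.

Lemma WJ0_succ (f : Cplx -> Cplx) (eta Lam : Cplx) (J : nat) (i j : Z) (v lam : Cplx) :
  (0 <= i)%Z ->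
  WJ0 f eta Lam (S J) i j v lam =
  Cadd (Cmul (W1 f eta Lam i 0 i 0 v (Cadd lam (Cmul (ZtoC (2 * (2 * j - Z.of_nat J))) eta)))
             (WJ0 f eta Lam J i j (Cadd v (Cmul (ZtoC 2) eta)) lam))
       (Cmul (W1 f eta Lam i 1 (i + 1) 0 v
                 (Cadd lam (Cmul (ZtoC (2 * (2 * (j - 1) - Z.of_nat J))) eta)))
             (WJ0 f eta Lam J (i + 1) (j - 1) (Cadd v (Cmul (ZtoC 2) eta)) lam)).
Proof.
  intros Hi; unfold WJ0; simpl bitvecs.
  rewrite filter_app, !filter_map, map_app, !map_map, Csum_app, <- !Csum_scal.
  replace (filter (fun x => (weight (true :: x) =? j)%Z) (bitvecs J))
    with (filter (fun x => (weight x =? j - 1)%Z) (bitvecs J)).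
  2:{ apply filter_ext; intros l; rewrite weight_cons_true.
      destruct (Z.eqb_spec (weight l + 1) j), (Z.eqb_spec (weight l) (j - 1)); lia. }
  f_equal; apply Csum_ext_in; intros l Hl; apply filter_In in Hl; destruct Hl as [Hl Hw];
    apply Z.eqb_eq in Hw; rewrite WJcol_cons_zero, Hw by auto using length_bitvecs; simpl bz.
  - rewrite Z.add_0_r; reflexivity.
  - replace (i + 1 + (j - 1))%Z with (i + j)%Z by lia; reflexivity.
Qed.

(** * The closed form *)

(* The Pochhammer symbol [a]_n is [zprod g 0 n] with g k = f (a + k eta). *)
Definition zprod (g : Z -> Cplx) (k n : Z) : Cplx :=
  Cprod (map (fun m : nat => g (k - 2 * Z.of_nat m)%Z) (seq 0 (Z.to_nat n))).

Lemma zprod_0 (g : Z -> Cplx) (k n : Z) : n = 0%Z -> zprod g k n = Defs.C1.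
Proof. intros ->; reflexivity. Qed.

Lemma zprod_succ_l (g : Z -> Cplx) (k n m : Z) : (0 <= n)%Z -> m = (n + 1)%Z ->
  zprod g k m = Cmul (g k) (zprod g (k - 2) n).
Proof.
  intros Hn ->; unfold zprod; rewrite Z2Nat.inj_add, Nat.add_1_r by lia.
  cbn [seq map Cprod fold_right]; rewrite <- seq_shift, map_map.
  f_equal; [f_equal; lia|]; unfold Cprod; f_equal; apply map_ext; intros; f_equal; lia.
Qed.

Lemma zprod_succ_r (g : Z -> Cplx) (k n m : Z) : (0 <= n)%Z -> m = (n + 1)%Z ->
  zprod g k m = Cmul (zprod g k n) (g (k - 2 * n)%Z).
Proof.
  intros Hn ->; unfold zprod; rewrite Z2Nat.inj_add by lia; simpl (Z.to_nat 1).
  rewrite seq_app, map_app, Cprod_app; simpl; rewrite Z2Nat.id by lia; ring.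
Qed.

Lemma zprod_shift (g : Z -> Cplx) (c k n : Z) :
  zprod (fun m => g (m + c)%Z) k n = zprod g (k + c) n.
Proof. unfold zprod; f_equal; apply map_ext; intros; f_equal; lia. Qed.

Lemma zprod_neq_0 (g : Z -> Cplx) (k n : Z) :
  (forall m, (0 <= m < n)%Z -> g (k - 2 * m)%Z <> C0) -> zprod g k n <> C0.
Proof.
  intros H; unfold zprod.
  assert (Hg : forall m, In m (seq 0 (Z.to_nat n)) -> g (k - 2 * Z.of_nat m)%Z <> C0)
    by (intros m Hm; apply in_seq in Hm; apply H; lia).
  induction (seq 0 (Z.to_nat n)) as [|a l IH]; simpl; [exact C1_neq_C0|].
  apply Cmul_neq_0; [apply Hg; left; reflexivity | apply IH; intros; apply Hg; right; assumption].
Qed.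

Lemma zprod_pred_start (g : Z -> Cplx) (k k' n : Z) : (0 <= n)%Z -> k' = (k - 2)%Z -> g k <> C0 ->
  zprod g k' n = Cdiv (Cmul (zprod g k n) (g (k - 2 * n)%Z)) (g k).
Proof.
  intros Hn -> Hk; rewrite <- (zprod_succ_r g k n (n + 1)), (zprod_succ_l g k n) by (auto; lia).
  field; assumption.
Qed.

Lemma Cpow_pred (z : Cplx) (j : Z) :
  (1 <= j)%Z -> Cpow z (Z.to_nat j) = Cmul z (Cpow z (Z.to_nat (j - 1))).
Proof. intros Hj; replace (Z.to_nat j) with (S (Z.to_nat (j - 1))) by lia; reflexivity. Qed.

(* The right-hand side of the theorem, with the Pochhammer symbols written
   through four families of values of f, instantiated below by
   g0 n = f (n eta), gx n = f (eta Lam - v + n eta), gl n = f (lam + n eta)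
   and gd n = f (lam - (eta Lam - v) + n eta). *)
Definition closed_form (g0 gx gl gd : Z -> Cplx) (N i j : Z) : Cplx :=
  Cmul (Cmul (Cmul (Cpow (g0 2%Z) (Z.to_nat j))
     (Cdiv (zprod g0 (2 * N) N) (Cmul (zprod g0 (2 * (N - j)) (N - j)) (zprod g0 (2 * j) j))))
     (Cdiv (zprod gl (2 * (i + j)) (N - j)) (zprod gx 0 N)))
     (Cdiv (Cmul (zprod gd (2 * (i + 2 * j - 1)) j) (zprod gx (- 2 * (i + j)) (N - j)))
           (Cmul (zprod gl (2 * j) (N - j)) (zprod gl (2 * (2 * j - N - 1)) j)))%Z.

(* Rewrite one [zprod g k' m'] whose (k', m') equals (k, m) up to [lia] by
   splitting off its first, resp. last, factor, or by moving its start from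
   k' to k' + 2. *)
Ltac peel_first g k m := match goal with |- context [zprod g ?k' ?m'] =>
  assert (k' = k)%Z by lia; assert (m' = m)%Z by lia;
  rewrite (zprod_succ_l g k' (m' - 1) m') by lia end.
Ltac peel_last g k m := match goal with |- context [zprod g ?k' ?m'] =>
  assert (k' = k)%Z by lia; assert (m' = m)%Z by lia;
  rewrite (zprod_succ_r g k' (m' - 1) m') by lia end.
Ltac drop_empty_zprods := repeat match goal with |- context [zprod ?g ?k ?m] =>
  rewrite (zprod_0 g k m) by lia end.

(* Identify syntactically different but [lia]-equal arguments, so that
   [field] sees equal atoms. *)
Ltac align_zprods :=
  repeat match goal with
  | |- context [zprod ?g ?k1 ?n1] => match goal with |- context [zprod g ?k2 ?n2] =>
       tryif (constr_eq k1 k2; constr_eq n1 n2) then fail else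
       (replace (zprod g k1 n1) with (zprod g k2 n2) by (f_equal; lia)) end
  end.
Ltac align_args g :=
  repeat match goal with
  | |- context [g ?k1] => match goal with |- context [g ?k2] =>
       tryif constr_eq k1 k2 then fail else (replace (g k1) with (g k2) by (f_equal; lia)) end
  end.

Section ClosedFormRecursion.
Variables (g0 gx gl gd : Z -> Cplx) (N i : Z).
Hypothesis HN : (1 <= N)%Z.
Hypothesis Hi : (0 <= i)%Z.
Hypothesis Hg0 : forall k, (k mod 2 = 0)%Z -> (2 <= k <= 2 * N)%Z -> g0 k <> C0.
Hypothesis Hgx : forall k, (k mod 2 = 0)%Z -> (- 2 * (N - 1) <= k <= 0)%Z -> gx k <> C0.
Hypothesis Hgl : forall k, (k mod 2 = 0)%Z -> (- 2 * (N + 1) <= k <= 2 * (N + 1))%Z -> gl k <> C0.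

Ltac solve_neq_0 :=
  repeat match goal with
  | |- _ /\ _ => split
  | |- Cmul _ _ <> C0 => apply Cmul_neq_0
  | |- zprod _ _ _ <> C0 => apply zprod_neq_0; intros ? ?
  | |- _ _ <> C0 => (apply Hg0 + apply Hgx + apply Hgl); [Z.div_mod_to_equations; lia | lia]
  end.

Ltac move_start g k m := match goal with |- context [zprod g ?k' ?m'] =>
  assert (k' = k)%Z by lia; assert (m' = m)%Z by lia;
  rewrite (zprod_pred_start g (k' + 2) k' m'); [ | lia | lia | solve_neq_0] end.

(* The two unfused weights W_1(i,0;i,0) and W_1(i,1;i+1,0) of the first column,
   with Phi_1 = lam + 2 eta (2 j - N + 1), resp. lam + 2 eta (2 j - N - 1). *)
Definition straight_weight (j : Z) : Cplx :=
  Cdiv (Cmul (gx (- 2 * i)%Z) (gl (2 * (2 * j - N + 1) + 2 * i)%Z))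
       (Cmul (gx 0%Z) (gl (2 * (2 * j - N + 1))%Z)).
Definition turn_weight (j : Z) : Cplx :=
  Cdiv (Cmul (gd (2 * (2 * j - N - 1) + 2 * i + 2)%Z) (g0 2%Z))
       (Cmul (gx 0%Z) (gl (2 * (2 * j - N - 1))%Z)).

(* Shifting v by 2 eta shifts the families gx and gd. *)
Let gx' := fun n => gx (n + -2)%Z.
Let gd' := fun n => gd (n + 2)%Z.

Lemma closed_form_rec_0 :
  closed_form g0 gx gl gd N i 0 = Cmul (straight_weight 0) (closed_form g0 gx' gl gd' (N - 1) i 0).
Proof.
  unfold closed_form, straight_weight, gx', gd'; rewrite !zprod_shift.
  peel_last gl (2 * i)%Z N; peel_first gx 0%Z N; peel_first gx (-2 * i)%Z N; peel_last gl 0%Z N.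
  drop_empty_zprods; align_zprods; align_args g0; align_args gx; align_args gl; align_args gd.
  field; solve_neq_0.
Qed.

Lemma closed_form_rec_N :
  closed_form g0 gx gl gd N i N =
  Cmul (turn_weight N) (closed_form g0 gx' gl gd' (N - 1) (i + 1) (N - 1)).
Proof.
  unfold closed_form, turn_weight, gx', gd'; rewrite !zprod_shift, (Cpow_pred (g0 2%Z) N) by lia.
  peel_first gx 0%Z N; peel_last gd (2 * (i + 2 * N - 1))%Z N; peel_first gl (2 * (N - 1))%Z N.
  drop_empty_zprods; align_zprods; align_args g0; align_args gx; align_args gl; align_args gd.
  field; solve_neq_0.
Qed.

Definition three_term_relation (j : Z) : Prop :=
  Cadd (Cmul (Cmul (gx (-2 * i)%Z) (gd (2 * (i + 2 * j))%Z))
             (Cmul (gl (2 * (j - N))%Z) (g0 (2 * (N - j))%Z)))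
       (Cmul (Cmul (gl (2 * j)%Z) (g0 (2 * j)%Z))
             (Cmul (gx (-2 * (i + N))%Z) (gd (2 * (i + 2 * j - N))%Z)))
  = Cmul (Cmul (gx (-2 * (i + j))%Z) (gd (2 * (i + j))%Z))
         (Cmul (gl (2 * (2 * j - N))%Z) (g0 (2 * N)%Z)).

(* After peeling, both sides are explicit multiples of the two closed forms for
   N - 1, and the common factor gd (2 (i + j)) gx (-2 (i + j)) of the left-hand
   side is traded for the three-term relation. *)
Lemma closed_form_rec (j : Z) : (1 <= j <= N - 1)%Z -> three_term_relation j ->
  closed_form g0 gx gl gd N i j =
  Cadd (Cmul (straight_weight j) (closed_form g0 gx' gl gd' (N - 1) i j))
       (Cmul (turn_weight j) (closed_form g0 gx' gl gd' (N - 1) (i + 1) (j - 1))).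
Proof.
  intros Hj; unfold three_term_relation, closed_form, straight_weight, turn_weight, gx', gd'.
  rewrite !zprod_shift, (Cpow_pred (g0 2%Z) j) by lia.
  peel_first g0 (2 * N)%Z N; repeat peel_first g0 (2 * (N - j))%Z (N - j)%Z;
  peel_first g0 (2 * j)%Z j.
  repeat peel_last gl (2 * (i + j))%Z (N - j)%Z; peel_last gl (2 * j)%Z (N - j)%Z;
  peel_last gl (2 * j - 2)%Z (N - j)%Z; move_start gl (2 * j - 2)%Z (N - j - 1)%Z;
  peel_first gl (2 * (2 * j - N - 1))%Z j; peel_first gl (4 * j - 2 * N)%Z j;
  repeat move_start gl (4 * j - 2 * N - 4)%Z (j - 1)%Z.
  peel_first gx 0%Z N; peel_first gx (-2 * (i + j))%Z (N - j)%Z;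
  peel_last gx (-2 * (i + j) - 2)%Z (N - j)%Z.
  peel_last gd (2 * (i + 2 * j - 1))%Z j; peel_first gd (2 * (i + 2 * j))%Z j.
  align_zprods; align_args g0; align_args gx; align_args gl; align_args gd.
  intro HT.
  match goal with |- context [gd ?k] =>
    assert (k = 2 * (i + j))%Z by lia; set (P := gd k) in * end.
  match goal with |- context [gx ?k] =>
    assert (k = -2 * (i + j))%Z by lia; set (Q := gx k) in * end.
  clearbody P Q.
  match type of HT with ?A = Cmul (Cmul Q P) ?b =>
    assert (HPQ : Cmul P Q = Cdiv A b) by (rewrite HT; field; solve_neq_0) end.
  match goal with |- ?L = _ => let L1 := eval pattern P, Q in L in
    match L1 with ?F _ _ =>
      assert (HL : L = Cmul (F Defs.C1 Defs.C1) (Cmul P Q))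
        by (cbv beta; field; solve_neq_0) end end.
  rewrite HL, HPQ; field; solve_neq_0.
Qed.

End ClosedFormRecursion.

(** * The fused weight *)

Definition fused_weight_formula (f : Cplx -> Cplx) (eta Lam : Cplx) (JZ iZ j : Z)
    (v lam : Cplx) : Cplx :=
  let e (n : Z) := Cmul (ZtoC n) eta in
  let P := epoch f eta in
  Cmul (Cmul (Cmul
    (Cpow (f (e 2%Z)) (Z.to_nat j))
    (Cdiv (P (e (2 * JZ)%Z) JZ)
          (Cmul (P (e (2 * (JZ - j))%Z) (JZ - j)%Z) (P (e (2 * j)%Z) j))))
    (Cdiv (P (Cadd lam (e (2 * (iZ + j))%Z)) (JZ - j)%Z)
          (P (Csub (Cmul eta Lam) v) JZ)))
    (Cdiv (Cmul (P (Csub (Cadd (Cadd v lam) (e (2 * (iZ + 2 * j - 1))%Z)) (Cmul eta Lam)) j)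
                (P (Csub (Csub (Cmul eta Lam) (e (2 * (iZ + j))%Z)) v) (JZ - j)%Z))
          (Cmul (P (Cadd lam (e (2 * j)%Z)) (JZ - j)%Z)
                (P (Cadd lam (e (2 * (2 * j - JZ - 1))%Z)) j))).

Lemma epoch_eq_zprod (f : Cplx -> Cplx) (eta a : Cplx) (g : Z -> Cplx) (k n : Z) : (0 <= n)%Z ->
  (forall m : nat, f (Csub a (Cmul (ZtoC (2 * Z.of_nat m)) eta)) = g (k - 2 * Z.of_nat m)%Z) ->
  epoch f eta a n = zprod g k n.
Proof.
  intros Hn H; unfold epoch; replace (0 <=? n)%Z with true by (symmetry; apply Z.leb_le; lia).
  unfold zprod; f_equal; apply map_ext; assumption.
Qed.

Section FusedWeight.
Variables (f : Cplx -> Cplx) (eta Lam lam : Cplx).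

Definition f_eta (n : Z) : Cplx := f (Cmul (ZtoC n) eta).
Definition f_x (v : Cplx) (n : Z) : Cplx := f (Cadd (Csub (Cmul eta Lam) v) (Cmul (ZtoC n) eta)).
Definition f_lam (n : Z) : Cplx := f (Cadd lam (Cmul (ZtoC n) eta)).
Definition f_d (v : Cplx) (n : Z) : Cplx :=
  f (Cadd (Csub lam (Csub (Cmul eta Lam) v)) (Cmul (ZtoC n) eta)).

Lemma fused_weight_formula_eq_closed_form (N i j : Z) (v : Cplx) : (0 <= j <= N)%Z ->
  fused_weight_formula f eta Lam N i j v lam = closed_form f_eta (f_x v) f_lam (f_d v) N i j.
Proof.
  intros Hj; unfold fused_weight_formula, closed_form; cbv zeta.
  repeat match goal with
  | |- context [epoch f eta ?a ?n] =>
     let tac g k := rewrite (epoch_eq_zprod f eta a g k n) by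
        (lia || (intro; unfold f_eta, f_x, f_lam, f_d; f_equal; Cplx_field)) in
     lazymatch a with
     | Cmul (ZtoC ?k) eta => tac f_eta k
     | Cadd lam (Cmul (ZtoC ?k) eta) => tac f_lam k
     | Csub (Cmul eta Lam) v => tac (f_x v) 0%Z
     | Csub (Csub (Cmul eta Lam) (Cmul (ZtoC ?k) eta)) v => tac (f_x v) (- k)%Z
     | Csub (Cadd (Cadd v lam) (Cmul (ZtoC ?k) eta)) (Cmul eta Lam) => tac (f_d v) k
     end
  end.
  unfold f_eta; repeat f_equal; lia.
Qed.

Lemma W1_straight (a : Z) (v phi : Cplx) : (0 <= a)%Z ->
  W1 f eta Lam a 0 a 0 v phi =
  Cdiv (Cmul (f (Csub (Cmul eta (Csub Lam (ZtoC (2 * a)))) v))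
             (f (Cadd phi (Cmul (ZtoC (2 * a)) eta))))
       (Cmul (f (Csub (Cmul eta Lam) v)) (f phi)).
Proof.
  intros Ha; unfold W1; replace (a <? 0)%Z with false by (symmetry; apply Z.ltb_ge; lia).
  cbv zeta; rewrite !Z.eqb_refl; reflexivity.
Qed.

Lemma W1_turn (a : Z) (v phi : Cplx) : (0 <= a)%Z ->
  W1 f eta Lam a 1 (a + 1) 0 v phi =
  Cdiv (Cmul (f (Cadd (Cadd v phi) (Cmul eta (Csub (ZtoC (2 * a + 2)) Lam))))
             (f (Cmul (ZtoC 2) eta)))
       (Cmul (f (Csub (Cmul eta Lam) v)) (f phi)).
Proof.
  intros Ha; unfold W1; replace (a <? 0)%Z with false by (symmetry; apply Z.ltb_ge; lia).
  cbv zeta; rewrite !Z.eqb_refl; reflexivity.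
Qed.

Ltac congr_args :=
  match goal with
  | |- f _ = f _ => f_equal; Cplx_field
  | |- Cmul _ _ = Cmul _ _ => f_equal; congr_args
  | |- Cadd _ _ = Cadd _ _ => f_equal; congr_args
  | |- Cdiv _ _ = Cdiv _ _ => f_equal; congr_args
  end.

Lemma W1_straight_eq (M i j : Z) (v : Cplx) : (0 <= i)%Z ->
  W1 f eta Lam i 0 i 0 v (Cadd lam (Cmul (ZtoC (2 * (2 * j - M))) eta)) =
  straight_weight (f_x v) f_lam (M + 1) i j.
Proof.
  intros; rewrite W1_straight by assumption; unfold straight_weight, f_x, f_lam; congr_args.
Qed.

Lemma W1_turn_eq (M i j : Z) (v : Cplx) : (0 <= i)%Z ->
  W1 f eta Lam i 1 (i + 1) 0 v (Cadd lam (Cmul (ZtoC (2 * (2 * (j - 1) - M))) eta)) =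
  turn_weight f_eta (f_x v) f_lam (f_d v) (M + 1) i j.
Proof.
  intros; rewrite W1_turn by assumption; unfold turn_weight, f_x, f_lam, f_d, f_eta; congr_args.
Qed.

Lemma f_x_shift (v : Cplx) : f_x (Cadd v (Cmul (ZtoC 2) eta)) = (fun n => f_x v (n + -2)%Z).
Proof. apply functional_extensionality; intros n; unfold f_x; f_equal; Cplx_field. Qed.

Lemma f_d_shift (v : Cplx) : f_d (Cadd v (Cmul (ZtoC 2) eta)) = (fun n => f_d v (n + 2)%Z).
Proof. apply functional_extensionality; intros n; unfold f_d; f_equal; Cplx_field. Qed.

(* Weierstrass identity at x1 = lam/2 + 2 j eta, x2 = lam/2 - 2 (N - j) eta,
   x3 = (eta Lam - v) - lam/2 - 2 (i + j) eta, x4 = lam/2. *)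
Lemma three_term_relation_of_weierstrass (N i j : Z) (v : Cplx) :
  weierstrass_identity f -> three_term_relation f_eta (f_x v) f_lam (f_d v) N i j.
Proof.
  intros Hf; set (h := Cmul lam (RtoC (1/2))); set (x := Csub (Cmul eta Lam) v).
  pose proof (Hf (Cadd h (Cmul (ZtoC (2 * j)) eta)) (Csub h (Cmul (ZtoC (2 * (N - j))) eta))
                 (Csub (Csub x h) (Cmul (ZtoC (2 * (i + j))) eta)) h) as E.
  unfold sym_prod in E; unfold three_term_relation, f_eta, f_x, f_lam, f_d.
  match type of E with ?l = ?r => match goal with |- ?l' = ?r' =>
    replace l' with l by (unfold h, x; congr_args);
    replace r' with r by (unfold h, x; congr_args) end end.
  exact E.
Qed.

Definition generic (J : Z) (v : Cplx) : Prop :=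
  (forall m : Z, (1 <= m <= J)%Z -> f (Cmul (ZtoC (2 * m)) eta) <> C0) /\
  (forall m : Z, (0 <= m < J)%Z ->
     f (Csub (Csub (Cmul eta Lam) v) (Cmul (ZtoC (2 * m)) eta)) <> C0) /\
  (forall m : Z, (- (J + 1) <= m <= J + 1)%Z -> f (Cadd lam (Cmul (ZtoC (2 * m)) eta)) <> C0).

Lemma generic_pred (J : Z) (v : Cplx) : (0 <= J)%Z ->
  generic (J + 1) v -> generic J (Cadd v (Cmul (ZtoC 2) eta)).
Proof.
  intros HJ [H1 [H2 H3]]; split; [|split]; intros m Hm.
  - apply H1; lia.
  - replace (Csub (Csub (Cmul eta Lam) (Cadd v (Cmul (ZtoC 2) eta))) (Cmul (ZtoC (2 * m)) eta))
      with (Csub (Csub (Cmul eta Lam) v) (Cmul (ZtoC (2 * (m + 1))) eta)) by Cplx_field.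
    apply H2; lia.
  - apply H3; lia.
Qed.

Lemma generic_families (N : Z) (v : Cplx) : generic N v ->
  (forall k, (k mod 2 = 0)%Z -> (2 <= k <= 2 * N)%Z -> f_eta k <> C0) /\
  (forall k, (k mod 2 = 0)%Z -> (- 2 * (N - 1) <= k <= 0)%Z -> f_x v k <> C0) /\
  (forall k, (k mod 2 = 0)%Z -> (- 2 * (N + 1) <= k <= 2 * (N + 1))%Z -> f_lam k <> C0).
Proof.
  intros [H1 [H2 H3]]; split; [|split]; intros k Hk Hr;
    assert (Hhalf : k = (2 * (k / 2))%Z) by (Z.div_mod_to_equations; lia); rewrite Hhalf in *.
  - apply H1; lia.
  - unfold f_x; replace (Cadd (Csub (Cmul eta Lam) v) (Cmul (ZtoC (2 * (k / 2))) eta))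
      with (Csub (Csub (Cmul eta Lam) v) (Cmul (ZtoC (2 * (- (k / 2)))) eta)) by Cplx_field.
    apply H2; lia.
  - apply H3; lia.
Qed.

Lemma WJ0_base (i : Z) (v : Cplx) : (0 <= i)%Z ->
  WJ0 f eta Lam 0 i 0 v lam = fused_weight_formula f eta Lam 0 i 0 v lam.
Proof.
  intros Hi; rewrite fused_weight_formula_eq_closed_form by lia; unfold closed_form.
  drop_empty_zprods; unfold WJ0, WJcol; simpl; rewrite iseq_1, Z.add_0_r, Z.eqb_refl.
  replace (0 <=? i)%Z with true by (symmetry; apply Z.leb_le; lia); simpl.
  apply Cplx_eq; simpl; field.
Qed.

Lemma WJ0_eq_formula (J : nat) (i j : Z) (v : Cplx) :
  weierstrass_identity f -> (0 <= i)%Z -> (0 <= j <= Z.of_nat J)%Z -> generic (Z.of_nat J) v ->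
  WJ0 f eta Lam J i j v lam = fused_weight_formula f eta Lam (Z.of_nat J) i j v lam.
Proof.
  intros Hf; revert i j v; induction J as [|J IH]; intros i j v Hi Hj Hgen.
  - replace j with 0%Z by (simpl in Hj; lia); apply WJ0_base; assumption.
  - rewrite WJ0_succ, W1_straight_eq, W1_turn_eq by assumption.
    assert (Hgen' := generic_pred (Z.of_nat J) v ltac:(lia)
                       ltac:(replace (Z.of_nat J + 1)%Z with (Z.of_nat (S J)) by lia; exact Hgen)).
    destruct (generic_families _ _ Hgen) as [G0 [Gx Gl]].
    set (N := Z.of_nat (S J)) in *; replace (Z.of_nat J) with (N - 1)%Z in * by (unfold N; lia).
    replace (N - 1 + 1)%Z with N by lia.
    rewrite fused_weight_formula_eq_closed_form by lia.
    destruct (Z.eq_dec j 0) as [-> | Hj0]; [|destruct (Z.eq_dec j N) as [-> | HjN]].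
    + rewrite (WJ0_out_of_range _ _ _ _ _ (0 - 1)%Z), IH, fused_weight_formula_eq_closed_form,
        f_x_shift, f_d_shift, (closed_form_rec_0 _ _ _ _ N i) by (auto; lia); ring.
    + rewrite (WJ0_out_of_range _ _ _ J i N), IH, fused_weight_formula_eq_closed_form,
        f_x_shift, f_d_shift, (closed_form_rec_N _ _ _ _ N i) by (auto; lia); ring.
    + rewrite !IH, !fused_weight_formula_eq_closed_form, f_x_shift, f_d_shift by (auto; lia).
      symmetry; apply closed_form_rec; auto; try lia.
      apply three_term_relation_of_weierstrass; assumption.
Qed.

End FusedWeight.

Theorem proposition4p3 :
  forall (eta tau Lam v lam : Cplx) (f : Cplx -> Cplx),
    0 < Im tau -> is_f tau f ->
    forall (i J : nat) (j : Z), (0 < J)%nat ->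
    (((j < 0)%Z \/ (j > Z.of_nat J)%Z) ->
       WJ f eta Lam J (Z.of_nat i) j (Z.of_nat i + j)%Z 0%Z v lam = C0) /\
    ((0 <= j <= Z.of_nat J)%Z ->
       (forall m : Z, (1 <= m <= Z.of_nat J)%Z -> f (Cmul (ZtoC (2 * m)) eta) <> C0) ->
       (forall m : Z, (0 <= m < Z.of_nat J)%Z ->
          f (Csub (Csub (Cmul eta Lam) v) (Cmul (ZtoC (2 * m)) eta)) <> C0) ->
       (forall m : Z, (- (Z.of_nat J + 1) <= m <= Z.of_nat J + 1)%Z ->
          f (Cadd lam (Cmul (ZtoC (2 * m)) eta)) <> C0) ->
       let JZ := Z.of_nat J in
       let iZ := Z.of_nat i in
       let e (n : Z) := Cmul (ZtoC n) eta in
       let P := epoch f eta in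
       WJ f eta Lam J iZ j (iZ + j)%Z 0%Z v lam =
       Cmul (Cmul (Cmul
         (Cpow (f (e 2%Z)) (Z.to_nat j))
         (Cdiv (P (e (2 * JZ)%Z) JZ)
               (Cmul (P (e (2 * (JZ - j))%Z) (JZ - j)%Z) (P (e (2 * j)%Z) j))))
         (Cdiv (P (Cadd lam (e (2 * (iZ + j))%Z)) (JZ - j)%Z)
               (P (Csub (Cmul eta Lam) v) JZ)))
         (Cdiv (Cmul (P (Csub (Cadd (Cadd v lam) (e (2 * (iZ + 2 * j - 1))%Z)) (Cmul eta Lam)) j)
                     (P (Csub (Csub (Cmul eta Lam) (e (2 * (iZ + j))%Z)) v) (JZ - j)%Z))
               (Cmul (P (Cadd lam (e (2 * j)%Z)) (JZ - j)%Z)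
                     (P (Cadd lam (e (2 * (2 * j - JZ - 1))%Z)) j)))).
Proof.
  intros eta tau Lam v lam f Htau Hf i J j _.
  assert (Hw : weierstrass_identity f)
    by (destruct Hf as [Hf | Hf];
        [exact (weierstrass_theta tau f Htau Hf) | exact (weierstrass_sin f Hf)]).
  split.
  - rewrite WJ_eq_WJ0; apply WJ0_out_of_range.
  - intros Hj H1 H2 H3; cbv zeta; rewrite WJ_eq_WJ0.
    apply (WJ0_eq_formula f eta Lam lam J); try assumption; [lia | repeat split; assumption].
Qed.
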